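(* Let $F$ be a cofibered groupoid over $C_\Lambda$ with $F(k)$ equivalent to a point, and let $\pi_0F$ be its functor of isomorphism classes of objects. Then $\pi_0F$ has the tangent lifting property if and only if for every $A\in C_\Lambda$ and every $X\in F(A)$ the natural map $T^1(X/A)\to T^1(X_0/k)$ is surjective, where $X_0$ is the restriction of $X$ to $k$.
   Context: $C_\Lambda$ is the category of Artin local $\Lambda$-algebras with residue field $k$, $\Lambda$ a complete noetherian local ring; $A[\epsilon]=A[x]/(x^2)$. A functor $G$ on $C_\Lambda$ has the tangent lifting property if $G(A[\epsilon])\to G(A)\times G(k[\epsilon])$ is surjective for all $A$. For $X\in F(A)$, $T^1(X/A)$ is the set of isomorphism classes of pairs $(Y,\psi)$ with $Y\in F(A[\epsilon])$ and $\psi\colon Y|_A\to X$ an isomorphism; the map $T^1(X/A)\to T^1(X_0/k)$ is induced by restriction along $A\to k$. *)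

From mathcomp Require Import all_boot all_algebra.
Set Implicit Arguments.
Unset Strict Implicit.
Unset Printing Implicit Defensive.
Import GRing.Theory.
Local Open Scope ring_scope.

Section RingNotions.
Variable R : comUnitRingType.

Definition nonunit (x : R) : Prop := x \isn't a GRing.unit.

(* Local ring: 1 <> 0 and the non-units form an additive subgroup (then
   they are the unique maximal ideal m_R). *)
Definition is_local : Prop :=
  (1 : R) != 0 /\ forall x y : R, nonunit x -> nonunit y -> nonunit (x + y).

Definition is_ideal (I : R -> Prop) : Prop :=
  [/\ I 0, (forall x y, I x -> I y -> I (x + y)) & (forall r x, I x -> I (r * x))].

Definition noetherian : Prop :=
  forall I : nat -> R -> Prop, (forall n, is_ideal (I n)) ->
  (forall n x, I n x -> I n.+1 x) ->
  exists N, forall n, (N <= n)%N -> forall x, I n x -> I N x.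

Definition artinian : Prop :=
  forall I : nat -> R -> Prop, (forall n, is_ideal (I n)) ->
  (forall n x, I n.+1 x -> I n x) ->
  exists N, forall n, (N <= n)%N -> forall x, I N x -> I n x.

Fixpoint idpow (I : R -> Prop) (n : nat) : R -> Prop :=
  match n with
  | 0 => fun _ => True
  | n'.+1 => fun x => exists s : seq (R * R),
      (forall p, p \in s -> I p.1 /\ idpow I n' p.2) /\
      x = \sum_(p <- s) p.1 * p.2
  end.

(* m-adic completeness and separatedness, m = maximal ideal = non-units:
   every m-adic Cauchy sequence has a unique limit. *)
Definition complete : Prop :=
  forall a : nat -> R, (forall n, idpow nonunit n (a n.+1 - a n)) ->
  exists l, (forall n, idpow nonunit n (l - a n)) /\
    forall l', (forall n, idpow nonunit n (l' - a n)) -> l' = l.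

End RingNotions.

Definition is_alg_hom (L : comUnitRingType) (A B : comUnitAlgType L)
  (f : A -> B) : Prop :=
  [/\ forall x y, f (x + y) = f x + f y,
      forall x y, f (x * y) = f x * f y,
      f 1 = 1 &
      forall (l : L) x, f (l *: x) = l *: f x].

(* Artin local Lambda-algebra with residue field k = Lambda/m_Lambda:
   local, artinian, and Lambda -> A/m_A surjective. *)
Definition artin_local_k (L : comUnitRingType) (A : comUnitAlgType L) : Prop :=
  [/\ is_local A, artinian A & forall a : A, exists l : L, nonunit (a - l%:A)].

Record Cob (L : comUnitRingType) := MkCob {
  Cty :> comUnitAlgType L;
  Cax : artin_local_k Cty }.

(* An object of C_Lambda which is a field, i.e. (a copy of) k itself. *)
Definition is_field_obj (L : comUnitRingType) (K : Cob L) : Prop :=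
  forall x : K, x != 0 -> x \is a GRing.unit.

(* A model of the dual numbers A[eps] = A[x]/(x^2) inside C_Lambda:
   D with an algebra map i : A -> D and an element e with e^2 = 0 such that
   every element of D is uniquely i a + i b * e; pr : D -> A is the
   projection x |-> 0. *)
Record dualnum (L : comUnitRingType) (A : Cob L) := MkDual {
  dn : Cob L;
  dn_i : A -> dn;
  dn_e : dn;
  dn_pr : dn -> A;
  dn_i_hom : is_alg_hom dn_i;
  dn_pr_hom : is_alg_hom dn_pr;
  dn_e2 : dn_e * dn_e = 0;
  dn_pr_i : forall a, dn_pr (dn_i a) = a;
  dn_pr_e : dn_pr dn_e = 0;
  dn_span : forall d : dn, exists a b, d = dn_i a + dn_i b * dn_e;
  dn_free : forall a b, dn_i a + dn_i b * dn_e = 0 -> a = 0 /\ b = 0 }.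

Arguments dn {L A} _.
Arguments dn_i {L A} _ _.
Arguments dn_e {L A} _.
Arguments dn_pr {L A} _ _.

Definition dual_map (L : comUnitRingType) (A B : Cob L)
  (EA : dualnum A) (EB : dualnum B) (f : A -> B) (phi : dn EA -> dn EB) : Prop :=
  [/\ is_alg_hom phi, (forall a, phi (dn_i EA a) = dn_i EB (f a))
    & phi (dn_e EA) = dn_e EB].

(* Categories cofibered in groupoids over C_Lambda, given as displayed  *)
(* categories: Fob A = objects of F over A, Fhom f X Y = arrows X -> Y  *)
(* of F lying over f : A -> B.                                          *)
Record cofib (L : comUnitRingType) := MkCofib {
  Fob : Cob L -> Type;
  Fhom : forall A B : Cob L, (A -> B) -> Fob A -> Fob B -> Type;
  Fid : forall (A : Cob L) (X : Fob A), Fhom (@id A) X X;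
  Fcomp : forall (A B C : Cob L) (f : A -> B) (g : B -> C)
    (X : Fob A) (Y : Fob B) (Z : Fob C),
    Fhom g Y Z -> Fhom f X Y -> Fhom (g \o f) X Z }.

Arguments Fob {L} _ _.
Arguments Fhom {L} _ {A B} _ _ _.
Arguments Fid {L} _ {A} _.
Arguments Fcomp {L} _ {A B C f g X Y Z} _ _.

Definition is_cofibered_groupoid (L : comUnitRingType) (F : cofib L) : Prop :=
  [/\
      (forall (A B : Cob L) (f : A -> B) X Y (u : Fhom F f X Y),
          Fcomp F (Fid F Y) u = u),
      (forall (A B : Cob L) (f : A -> B) X Y (u : Fhom F f X Y),
          Fcomp F u (Fid F X) = u),
      (forall (A B C D : Cob L) (f : A -> B) (g : B -> C) (h : C -> D)
          X Y Z W (u : Fhom F f X Y) (v : Fhom F g Y Z) (w : Fhom F h Z W),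
          Fcomp F w (Fcomp F v u) = Fcomp F (Fcomp F w v) u),
      (* existence of pushforwards along morphisms of C_Lambda *)
      (forall (A B : Cob L) (f : A -> B), is_alg_hom f ->
          forall X : Fob F A, exists Y : Fob F B, inhabited (Fhom F f X Y)) &
      (* every arrow is cocartesian *)
      (forall (A B C : Cob L) (f : A -> B) (g : B -> C),
          is_alg_hom f -> is_alg_hom g ->
          forall X Y Z (u : Fhom F f X Y) (w : Fhom F (g \o f) X Z),
          exists v : Fhom F g Y Z, Fcomp F v u = w /\
            forall v' : Fhom F g Y Z, Fcomp F v' u = w -> v' = v)].

Definition fiber_is_point (L : comUnitRingType) (F : cofib L) (K : Cob L) : Prop :=
  inhabited (Fob F K) /\
  forall X Y : Fob F K, exists u : Fhom F (@id K) X Y,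
    forall u' : Fhom F (@id K) X Y, u' = u.

Definition Feq (L : comUnitRingType) (F : cofib L) (A B : Cob L) (f g : A -> B)
  (X : Fob F A) (Y : Fob F B) (u : Fhom F f X Y) (w : Fhom F g X Y) : Prop :=
  exists e : f = g, eq_rect f (fun h => Fhom F h X Y) u g e = w.

Definition isoclass (L : comUnitRingType) (F : cofib L) (A : Cob L)
  (X : Fob F A) : Fob F A -> Prop :=
  fun Y => inhabited (Fhom F (@id A) X Y).

Definition is_pi0 (L : comUnitRingType) (F : cofib L) (A : Cob L)
  (c : Fob F A -> Prop) : Prop := exists X, c = isoclass X.

Definition pi0map (L : comUnitRingType) (F : cofib L) (A B : Cob L) (f : A -> B)
  (c : Fob F A -> Prop) : Fob F B -> Prop :=
  fun Y => exists X, c X /\ inhabited (Fhom F f X Y).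

(* Tangent lifting property of pi_0 F:
   pi_0F(A[eps]) -> pi_0F(A) x pi_0F(k[eps]) surjective for all A. *)
Definition pi0_tangent_lifting (L : comUnitRingType) (F : cofib L)
  (E : forall A : Cob L, dualnum A) (K : Cob L) : Prop :=
  forall (A : Cob L) (q : A -> K) (phi : dn (E A) -> dn (E K)),
  is_alg_hom q -> dual_map q phi ->
  forall (a : Fob F A -> Prop) (b : Fob F (dn (E K)) -> Prop),
  is_pi0 a -> is_pi0 b ->
  exists c : Fob F (dn (E A)) -> Prop, is_pi0 c /\ pi0map (dn_pr (E A)) c = a /\ pi0map phi c = b.

(* T^1(X/A): pairs (Y, psi) with Y in F(A[eps]) and psi : Y|_A ~ X,     *)
(* i.e. an arrow Y -> X of F over pr : A[eps] -> A.                     *)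
Definition T1 (L : comUnitRingType) (F : cofib L) (A : Cob L) (EA : dualnum A)
  (X : Fob F A) : Type := { Y : Fob F (dn EA) & Fhom F (dn_pr EA) Y X }.

(* (Z, w) represents the image of (Y, u) under T^1(X/A) -> T^1(X0/k), where
   c : X -> X0 exhibits X0 as the restriction of X along q : A -> k. *)
Definition T1_restr (L : comUnitRingType) (F : cofib L) (A K : Cob L)
  (EA : dualnum A) (EK : dualnum K) (q : A -> K) (phi : dn EA -> dn EK)
  (X : Fob F A) (X0 : Fob F K) (c : Fhom F q X X0)
  (t : T1 EA X) (s : T1 EK X0) : Prop :=
  exists v : Fhom F phi (projT1 t) (projT1 s),
    Feq (Fcomp F (projT2 s) v) (Fcomp F c (projT2 t)).

Arguments T1_restr {L F A K EA EK q} phi {X X0} c t s.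

Definition T1_surjective (L : comUnitRingType) (F : cofib L)
  (E : forall A : Cob L, dualnum A) (K : Cob L) : Prop :=
  forall (A : Cob L) (q : A -> K) (phi : dn (E A) -> dn (E K)),
  is_alg_hom q -> dual_map q phi ->
  forall (X : Fob F A) (X0 : Fob F K) (c : Fhom F q X X0),
  forall s : T1 (E K) X0, exists t : T1 (E A) X, T1_restr phi c t s.

(* Since F(k) is a point and every arrow of F is cocartesian, there is at
   most one arrow from an object X over A to an object X0 over k lying over a
   given map A -> k. Hence the compatibility condition defining
   T^1(X/A) -> T^1(X0/k) holds automatically, and both conditions reduce to lifting a pair of classes
   ([X], [Z]) in pi0F(A) x pi0F(k[eps]) to an object Y over A[eps] with
   arrows Y -> X over pr and Y -> Z over A[eps] -> k[eps]. *)
From mathcomp Require Import all_boot all_algebra.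
From Stdlib Require Import FunctionalExtensionality PropExtensionality.
Import GRing.Theory.

Lemma id_alg_hom {L : comUnitRingType} (A : comUnitAlgType L) : is_alg_hom (@id A).
Proof. by split. Qed.

Lemma comp_alg_hom {L : comUnitRingType} {A B C : comUnitAlgType L}
    {f : A -> B} {g : B -> C} :
  is_alg_hom f -> is_alg_hom g -> is_alg_hom (g \o f).
Proof.
case=> fD fM f1 fZ [gD gM g1 gZ]; split=> [x y|x y||l x] /=.
- by rewrite fD gD.
- by rewrite fM gM.
- by rewrite f1 g1.
- by rewrite fZ gZ.
Qed.

Lemma dual_map_prC {L : comUnitRingType} {A B : Cob L}
    {EA : dualnum A} {EB : dualnum B} {f : A -> B} {phi : dn EA -> dn EB} :
  dual_map f phi -> dn_pr EB \o phi = f \o dn_pr EA.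
Proof.
case=> [[phiD phiM _ _] phi_i phi_e].
apply: functional_extensionality => d /=.
have [a [b ->]] := dn_span d.
have [prAD prAM _ _] := dn_pr_hom EA.
have [prBD prBM _ _] := dn_pr_hom EB.
rewrite phiD phiM !phi_i phi_e prAD prAM prBD prBM !dn_pr_i !dn_pr_e.
by rewrite !mulr0 !addr0.
Qed.

Section CofiberedGroupoid.

Context {L : comUnitRingType} {F : cofib L}.
Hypothesis hF : is_cofibered_groupoid F.

Lemma pi0map_isoclassP {A B : Cob L} {f : A -> B} {Y : Fob F A} {X : Fob F B} :
  is_alg_hom f -> pi0map f (isoclass Y) = isoclass X <-> inhabited (Fhom F f Y X).
Proof.
case: hF => _ _ _ _ cocart hf; split.
- move=> piYX.
  have : isoclass X X by constructor; exact: Fid.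
  by rewrite -piYX => -[Y' [[i] [u]]]; constructor; exact: Fcomp u i.
- case=> u; apply: functional_extensionality => W.
  apply: propositional_extensionality; split.
  + case=> Y' [[i] [u']].
    have [v _] := cocart _ _ _ f id hf (id_alg_hom B) _ _ _ u (Fcomp F u' i).
    by constructor; exact: v.
  + by case=> v; exists Y; split; constructor; [exact: Fid | exact: Fcomp v u].
Qed.

Lemma fhom_to_point_unique {A K : Cob L} {g : A -> K} {X : Fob F A} {X0 : Fob F K} :
  fiber_is_point F K -> is_alg_hom g -> forall u v : Fhom F g X X0, u = v.
Proof.
case: hF => idl _ _ _ cocart [_ pt] hg u v.
have [alpha [<- _]] := cocart _ _ _ g id hg (id_alg_hom K) _ _ _ u v.
have [iota iotaP] := pt X0 X0.
by rewrite (iotaP alpha) -(iotaP (Fid F X0)) idl.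
Qed.

End CofiberedGroupoid.

Theorem lemma1 (L : comUnitRingType)
  (hLloc : is_local L) (hLnoeth : noetherian L) (hLcomp : complete L)
  (E : forall A : Cob L, dualnum A)
  (K : Cob L) (hK : is_field_obj K)
  (F : cofib L) (hF : is_cofibered_groupoid F) (hpt : fiber_is_point F K) :
  pi0_tangent_lifting F E K <-> T1_surjective F E K.
Proof.
have prA_hom A := dn_pr_hom (E A).
split.
- move=> lift A q phi hq hphi X X0 c [Z w].
  have [phi_hom _ _] := hphi.
  have [_ [[Y ->] [piYX piYZ]]] :=
    lift A q phi hq hphi _ _ (ex_intro _ X erefl) (ex_intro _ Z erefl).
  have [u] := (pi0map_isoclassP hF (prA_hom A)).1 piYX.
  have [v] := (pi0map_isoclassP hF phi_hom).1 piYZ.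
  exists (existT _ Y u), v; exists (dual_map_prC hphi).
  apply: (fhom_to_point_unique hF hpt); exact: comp_alg_hom.
- move=> surj A q phi hq hphi _ _ [X ->] [Z ->].
  have [_ _ _ push _] := hF; have [_ pt] := hpt.
  have [X0 [c]] := push _ _ q hq X.
  have [Z0 [w]] := push _ _ _ (prA_hom K) Z.
  have [iso _] := pt Z0 X0.
  have [[Y u] [v _]] := surj A q phi hq hphi X X0 c (existT _ Z (Fcomp F iso w)).
  exists (isoclass Y); split; first by exists Y.
  have [phi_hom _ _] := hphi.
  by split; apply/pi0map_isoclassP => //; constructor.
Qed.
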